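(* Let $\mathcal C\subseteq\{0,1\}^n$ and $\mathcal D\subseteq\{0,1\}^m$ be neural codes and $\phi:R_\mathcal D\to R_\mathcal C$ a ring homomorphism. Then $\phi$ is a neural ring homomorphism if and only if there is a vector $S=(s_1,\dots,s_m)$ with $s_i\in[n]\cup\{0,u\}$ such that $q_\phi=q_S|_\mathcal C$.
   Context: For a code $\mathcal C\subseteq\{0,1\}^n$, $R_\mathcal C$ is the ring of functions $\mathcal C\to\mathbb F_2$ and $R[n]=R_{\{0,1\}^n}=\mathbb F_2[x_1,\dots,x_n]/\langle x_i^2-x_i\rangle$; $R_\mathcal C$ is an $R[n]$-module via $(r\cdot f)(c)=r(c)f(c)$. $\rho_d$ is the indicator of $\{d\}$, and $q_\phi:\mathcal C\to\mathcal D$ sends $c$ to the unique $d\in\mathcal D$ with $\phi(\rho_d)(c)=1$. A ring homomorphism $\tau:R[m]\to R[n]$ is compatible with $\phi$ if $\phi(r\cdot f)=\tau(r)\cdot\phi(f)$ for all $r\in R[m]$, $f\in R_\mathcal D$; it is linear-monomial if $\tau(x_i)\in\{x_1,\dots,x_n,0,1\}$ for every $i$. $\phi$ is a neural ring homomorphism if some linear-monomial $\tau:R[m]\to R[n]$ is compatible with $\phi$. For $S=(s_1,\dots,s_m)$ with $s_i\in[n]\cup\{0,u\}$ ($u$ a formal symbol), $q_S:\{0,1\}^n\to\{0,1\}^m$ is $q_S(c)=d$ with $d_i=c_j$ if $s_i=j$, $d_i=0$ if $s_i=0$, $d_i=1$ if $s_i=u$. *)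

From HB Require Import structures.
From mathcomp Require Import all_boot all_algebra.
Set Implicit Arguments. Unset Strict Implicit. Unset Printing Implicit Defensive.
Import GRing.Theory.
Local Open Scope ring_scope.

Definition bvec (n : nat) := {ffun 'I_n -> bool}.

Definition cwords (n : nat) (C : {set bvec n}) := {c : bvec n | c \in C}.

Definition RC (n : nat) (C : {set bvec n}) := {ffun cwords C -> 'F_2}.

(* R[n] = F_2[x_1..x_n]/<x_i^2 - x_i>, realized as functions {0,1}^n -> F_2. *)
Definition Rn (n : nat) := {ffun bvec n -> 'F_2}.

Definition xvar (n : nat) (i : 'I_n) : Rn n := [ffun c : bvec n => (c i)%:R].

Definition act (n : nat) (C : {set bvec n}) (r : Rn n) (f : RC C) : RC C :=
  [ffun c => r (val c) * f c].

Definition rho (m : nat) (D : {set bvec m}) (d : cwords D) : RC D :=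
  [ffun d' => (d' == d)%:R].

(* q_phi c = the unique d in D with phi(rho_d)(c) = 1
   (None if no such d exists, which never happens for ring homomorphisms). *)
Definition qphi (n m : nat) (C : {set bvec n}) (D : {set bvec m})
  (phi : RC D -> RC C) (c : cwords C) : option (bvec m) :=
  omap val [pick d : cwords D | phi (rho d) c == 1].

Definition compatible (n m : nat) (C : {set bvec n}) (D : {set bvec m})
  (phi : RC D -> RC C) (tau : Rn m -> Rn n) : Prop :=
  forall (r : Rn m) (f : RC D), phi (act r f) = act (tau r) (phi f).

Definition linear_monomial (n m : nat) (tau : Rn m -> Rn n) : Prop :=
  forall i : 'I_m,
    (exists j : 'I_n, tau (xvar i) = xvar j) \/ tau (xvar i) = 0 \/ tau (xvar i) = 1.

Definition neural_ring_hom (n m : nat) (C : {set bvec n}) (D : {set bvec m})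
  (phi : RC D -> RC C) : Prop :=
  exists tau : {rmorphism Rn m -> Rn n},
    linear_monomial tau /\ compatible phi tau.

Inductive sym (n : nat) := SVar of 'I_n | SZero | SU.

Definition qS (n m : nat) (S : 'I_m -> sym n) (c : bvec n) : bvec m :=
  [ffun i => match S i with SVar j => c j | SZero => false | SU => true end].

(* A ring morphism phi : R_D -> R_C between rings of F_2-valued functions is
   precomposition with the map q_phi: the indicators rho_d are orthogonal
   idempotents summing to 1, so for every c exactly one phi(rho_d) takes the
   value 1 at c, and multiplying g by that indicator shows phi(g)(c) = g(d).
   Compatibility with tau, applied to x_i * rho_d, then reads
   tau(x_i)(c) = d_i.  So tau(x_i) = x_j, 0 or 1 says exactly that the i-th
   coordinate of q_phi(c) is c_j, 0 or 1; conversely precomposition with q_S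
   is a linear-monomial ring morphism compatible with phi. *)
From HB Require Import structures.
From mathcomp Require Import all_boot all_algebra.
Set Implicit Arguments. Unset Strict Implicit. Unset Printing Implicit Defensive.
Import GRing.Theory.
Local Open Scope ring_scope.

Lemma F2_cases (x : 'F_2) : x = 0 \/ x = 1.
Proof. by case: x => [[|[|k]] Hk]; [left|right|by []]; exact: val_inj. Qed.

Lemma F2_natb_inj (b b' : bool) : (b%:R : 'F_2) = b'%:R -> b = b'.
Proof. by case: b; case: b'. Qed.

Section FunctionRingMorphism.

Variables (T U : finType) (phi : {rmorphism {ffun T -> 'F_2} -> {ffun U -> 'F_2}}).

Definition delta (t : T) : {ffun T -> 'F_2} := [ffun t' => (t' == t)%:R].

Lemma sum_delta : \sum_t delta t = 1.
Proof.
apply/ffunP => t'; rewrite sum_ffunE [RHS]ffunE (bigD1 t') //= ffunE eqxx big1 ?addr0 //.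
by move=> t /negbTE ne_tt'; rewrite ffunE eq_sym ne_tt'.
Qed.

Lemma mul_delta (g : {ffun T -> 'F_2}) t : g * delta t = if g t == 1 then delta t else 0.
Proof.
apply/ffunP => t'; rewrite !ffunE.
have [-> | /negbTE ne] := eqVneq t' t; case: (F2_cases (g t)) => gt;
  by rewrite gt ?eqxx ?ffunE ?ne ?eqxx ?mulr0 ?mulr1.
Qed.

Lemma rmorph_delta_exists u : exists t, phi (delta t) u = 1.
Proof.
case: (pickP (fun t => phi (delta t) u == 1)) => [t /eqP | none]; first by exists t.
have := congr1 (fun f : {ffun U -> 'F_2} => f u) (rmorph1 phi).
rewrite -sum_delta rmorph_sum sum_ffunE ffunE big1 // => t _.
by case: (F2_cases (phi (delta t) u)) => // one; move: (none t); rewrite one eqxx.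
Qed.

Lemma rmorph_eval u t (g : {ffun T -> 'F_2}) : phi (delta t) u = 1 -> phi g u = g t.
Proof.
move=> one; have -> : phi g u = (phi g * phi (delta t)) u by rewrite ffunE one mulr1.
rewrite -rmorphM mul_delta.
by case: (F2_cases (g t)) => ->; rewrite ?eqxx ?rmorph0 ?ffunE.
Qed.

End FunctionRingMorphism.

Lemma qphiP n m (C : {set bvec n}) (D : {set bvec m})
    (phi : {rmorphism RC D -> RC C}) (c : cwords C) :
  exists2 d : cwords D, qphi phi c = Some (val d) & forall g, phi g c = g d.
Proof.
(* [rho d] is convertible to [delta d], so the lemmas above apply to it. *)
rewrite /qphi; case: pickP => [d /eqP one | none].
  by exists d => // g; apply: rmorph_eval one.
by case: (rmorph_delta_exists phi c) => d one; move: (none d); rewrite /rho one eqxx.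
Qed.

Definition monomial_shape n (r : Rn n) : Prop := (exists j, r = xvar j) \/ r = 0 \/ r = 1.

Definition sym_eval n (s : sym n) : Rn n :=
  match s with SVar j => xvar j | SZero => 0 | SU => 1 end.

Definition sym_of n (r : Rn n) : sym n :=
  if [pick j | r == xvar j] is Some j then SVar j else if r == 0 then SZero n else SU n.

Lemma sym_eval_shape n (s : sym n) : monomial_shape (sym_eval s).
Proof. by case: s => [j||]; [left; exists j | right; left | right; right]. Qed.

Lemma sym_ofK n (r : Rn n) : monomial_shape r -> sym_eval (sym_of r) = r.
Proof.
rewrite /sym_of; case: pickP => [j /eqP -> // | none] shape.
have [-> // | nz] := eqVneq r 0.
by case: shape => [[j rj] | [r0 | ->]] //; [move: (none j); rewrite rj eqxx | move: nz; rewrite r0 eqxx].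
Qed.

Lemma qS_natr n m (S : 'I_m -> sym n) c i : (qS S c i)%:R = sym_eval (S i) c.
Proof. by rewrite !ffunE; case: (S i) => [j||]; rewrite ?ffunE. Qed.

Definition comap n m (q : bvec n -> bvec m) (r : Rn m) : Rn n := [ffun c => r (q c)].

Fact comap_is_zmod_morphism n m (q : bvec n -> bvec m) : zmod_morphism (comap q).
Proof. by move=> x y; apply/ffunP => c; rewrite !ffunE. Qed.

Fact comap_is_monoid_morphism n m (q : bvec n -> bvec m) : monoid_morphism (comap q).
Proof. by split=> [|x y]; apply/ffunP => c; rewrite !ffunE. Qed.

HB.instance Definition _ n m (q : bvec n -> bvec m) :=
  GRing.isZmodMorphism.Build (Rn m) (Rn n) (comap q) (comap_is_zmod_morphism q).
HB.instance Definition _ n m (q : bvec n -> bvec m) :=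
  GRing.isMonoidMorphism.Build (Rn m) (Rn n) (comap q) (comap_is_monoid_morphism q).

Lemma comap_qS_xvar n m (S : 'I_m -> sym n) i : comap (qS S) (xvar i) = sym_eval (S i).
Proof. by apply/ffunP => c; rewrite ffunE -qS_natr ffunE. Qed.

Lemma comap_qS_linear_monomial n m (S : 'I_m -> sym n) : linear_monomial (comap (qS S)).
Proof. by move=> i; rewrite comap_qS_xvar; apply: sym_eval_shape. Qed.

Lemma compatible_xvar n m (C : {set bvec n}) (D : {set bvec m})
    (phi : {rmorphism RC D -> RC C}) (tau : Rn m -> Rn n) c (d : cwords D) i :
  compatible phi tau -> (forall g, phi g c = g d) ->
  tau (xvar i) (val c) = (val d i)%:R.
Proof.
move=> compat eval_d; have := eval_d (act (xvar i) (rho d)).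
by rewrite compat ffunE !eval_d !ffunE eqxx !mulr1.
Qed.

Theorem lemma7 (n m : nat) (C : {set bvec n}) (D : {set bvec m})
  (phi : {rmorphism RC D -> RC C}) :
  neural_ring_hom phi <->
  exists S : 'I_m -> sym n, forall c : cwords C, qphi phi c = Some (qS S (val c)).
Proof.
split=> [[tau [lin_mon compat]] | [S qphi_qS]].
  exists (fun i => sym_of (tau (xvar i))) => c.
  have [d -> eval_d] := qphiP phi c; congr Some; apply/ffunP => i.
  apply: F2_natb_inj; rewrite qS_natr sym_ofK //.
  by rewrite (compatible_xvar i compat eval_d).
exists (comap (qS S)); split=> [|r f]; first exact: comap_qS_linear_monomial.
apply/ffunP => c; have [d qphi_d eval_d] := qphiP phi c.
have d_qS : val d = qS S (val c) by apply: Some_inj; rewrite -qphi_d qphi_qS.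
by rewrite [RHS]ffunE !eval_d !ffunE d_qS.
Qed.
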